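(* Let $m,k\in\mathbb{N}$. Then \[ {}_3F_2\left[\begin{array}{r} -2m,\ 1+k,\ 1+k;\\ -2m-k,\ -2m-k;\end{array}1\right]_{2m}=\frac{(1+k)_{m}(1+k)_{m}2^{2m}\left(\frac{1}{2}\right)_m(2+2k)_{2m}}{(1+k)_{2m}(1+k)_{2m}(2+2k)_{m}}. \]
   Context: $\mathbb{N}=\{1,2,3,\dots\}$. For $a\in\mathbb{C}$ and $n\in\mathbb{N}_0$, $(a)_0=1$ and $(a)_n=a(a+1)\cdots(a+n-1)$. For $N\in\mathbb{N}_0$, ${}_3F_2\left[\begin{array}{r} a_1,a_2,a_3;\\ b_1,b_2;\end{array}z\right]_N=\sum_{n=0}^{N}\frac{(a_1)_n(a_2)_n(a_3)_n}{(b_1)_n(b_2)_n}\frac{z^n}{n!}$ (the sum of the first $N+1$ terms), defined whenever $(b_1)_n(b_2)_n\neq0$ for $0\le n\le N$. *)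

From mathcomp Require Import all_boot all_algebra.
Set Implicit Arguments. Unset Strict Implicit. Unset Printing Implicit Defensive.
Import GRing.Theory.
Local Open Scope ring_scope.

Definition poch (a : rat) (n : nat) : rat := \prod_(i < n) (a + i%:R).

Definition F32_trunc (a1 a2 a3 b1 b2 z : rat) (N : nat) : rat :=
  \sum_(n < N.+1)
    (poch a1 n * poch a2 n * poch a3 n) / (poch b1 n * poch b2 n)
      * z ^+ n / (n`!)%:R.

(* Creative telescoping.  Up to the factor (k! (2m+k)!)^2 the truncated series
   is the sum S(m) of (-1)^n C(2m,n) ((k+n)! (2m+k-n)!)^2 over n <= 2m.  Zeilberger's
   algorithm yields a certificate G(m,n), a polynomial multiple of a summand of
   total index 2m+1, such that a(m) t(m+1,n+1) - b(m) t(m,n) = G(m,n+1) - G(m,n);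
   summing over n gives the first-order recurrence a(m) S(m+1) = b(m) S(m).  The
   right-hand side, multiplied by the same factor, satisfies the same recurrence
   and both sides agree at m = 0. *)

From mathcomp Require Import all_boot all_algebra ring lra.
Import GRing.Theory Num.Theory.
Local Open Scope ring_scope.

Local Notation "n `!%:Q" := ((n`!)%:R : rat) (at level 2, format "n `!%:Q").

Lemma factQ_neq0 n : n`!%:Q != 0.
Proof. by rewrite pnatr_eq0 -lt0n fact_gt0. Qed.

Lemma factQS n : n.+1`!%:Q = n.+1%:R * n`!%:Q.
Proof. by rewrite factS natrM. Qed.

Lemma poch0 a : poch a 0 = 1.
Proof. by rewrite /poch big_ord0. Qed.

Lemma pochS a n : poch a n.+1 = poch a n * (a + n%:R).
Proof. by rewrite /poch big_ord_recr. Qed.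

Lemma poch_gt0 a n : 0 < a -> 0 < poch a n.
Proof. by move=> a_gt0; apply: prodr_gt0 => i _; rewrite ltr_wpDr. Qed.

Lemma poch_oppn N n : (n <= N)%N -> poch (- N%:R) n = (-1) ^+ n * N`!%:Q / (N - n)`!%:Q.
Proof.
elim: n => [|n IHn] lt_nN; first by rewrite poch0 subn0 mul1r divff ?factQ_neq0.
have le_nN := ltnW lt_nN.
rewrite pochS (IHn le_nN) -(subnSK lt_nN) factQS subnSK // natrB // exprS.
by field; rewrite factQ_neq0 -natrB // pnatr_eq0 -lt0n subn_gt0.
Qed.

Lemma poch_1addn k n : poch (1 + k%:R) n = (k + n)`!%:Q / k`!%:Q.
Proof.
elim: n => [|n IHn]; first by rewrite poch0 addn0 divff ?factQ_neq0.
by rewrite pochS IHn addnS factQS; field; apply: factQ_neq0.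
Qed.

Lemma first_order_rec_uniq (F : fieldType) (a b u v : nat -> F) :
  (forall m, a m != 0) ->
  (forall m, a m * u m.+1 = b m * u m) -> (forall m, a m * v m.+1 = b m * v m) ->
  u 0%N = v 0%N -> u =1 v.
Proof.
move=> a_neq0 rec_u rec_v eq0; elim=> [//|m IHm].
by apply: (mulfI (a_neq0 m)); rewrite rec_u rec_v IHm.
Qed.

Section Dixon.
Variable k : nat.
Local Notation K := (k%:R : rat).

Definition dixon_term (p q : nat) : rat :=
  (-1) ^+ p * (p + q)`!%:Q / (p`!%:Q * q`!%:Q) * ((k + p)`!%:Q * (k + q)`!%:Q) ^+ 2.

Definition dixon_sum (m : nat) : rat := \sum_(n < (2 * m).+1) dixon_term n (2 * m - n).

Definition dixon_scale (m : nat) : rat := k`!%:Q * (2 * m + k)`!%:Q.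

Definition dixon_closed (m : nat) : rat :=
  poch (1 + K) m * poch (1 + K) m * 2 ^+ (2 * m) * poch (1 / 2) m * poch (2 + 2 * K) (2 * m)
  / (poch (1 + K) (2 * m) * poch (1 + K) (2 * m) * poch (2 + 2 * K) m).

Lemma dixon_term_succl p q :
  dixon_term p.+1 q = - ((p + q).+1%:R / p.+1%:R * (k + p).+1%:R ^+ 2) * dixon_term p q.
Proof.
rewrite /dixon_term addSn addnS !factQS exprS.
by field; rewrite !factQ_neq0 nat1r pnatr_eq0.
Qed.

Lemma dixon_term_succr p q :
  dixon_term p q.+1 = (p + q).+1%:R / q.+1%:R * (k + q).+1%:R ^+ 2 * dixon_term p q.
Proof.
rewrite /dixon_term !addnS !factQS.
by field; rewrite !factQ_neq0 nat1r pnatr_eq0.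
Qed.

Definition dixon_lcoef (m : nat) : rat := 2 * (m%:R + 1) * (2 * K + m%:R + 2).

Definition dixon_rcoef (m : nat) : rat :=
  8 * (2 * m%:R + 1) * (m%:R + 1) * (K + m%:R + 1) ^+ 3 * (2 * K + 2 * m%:R + 3).

(* Produced by Zeilberger's algorithm; [wz_cert m p * dixon_term p (2m + 1 - p)] is
   the telescoping certificate. *)
Definition wz_cert (m p : nat) : rat :=
  let M := m%:R in let n := p.+1%:R in
  - 2 * (M + 1) * ((M + 1) * (n ^+ 2 - (2 * M + 3) * n)
    - (6 + 16 * K + 10 * K ^+ 2 + 2 * K ^+ 3 + 16 * M + 28 * M * K + 9 * M * K ^+ 2
       + 14 * M ^+ 2 + 12 * M ^+ 2 * K + 4 * M ^+ 3)).

Lemma wz_step m p q : (p + q = 2 * m)%N ->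
  dixon_lcoef m * dixon_term p.+1 q.+1
  = dixon_rcoef m * dixon_term p q
    + (wz_cert m p.+1 * dixon_term p.+1 q - wz_cert m p * dixon_term p q.+1).
Proof.
move=> pq_2m.
rewrite /dixon_lcoef /dixon_rcoef /wz_cert !dixon_term_succl !dixon_term_succr.
have -> : (m%:R : rat) = (p%:R + q%:R) / 2 by rewrite -natrD pq_2m natrM; field.
by field; rewrite !nat1r !pnatr_eq0.
Qed.

Lemma wz_step_first m :
  dixon_lcoef m * dixon_term 0 (2 * m).+2 = wz_cert m 0 * dixon_term 0 (2 * m).+1.
Proof.
rewrite /dixon_lcoef /wz_cert dixon_term_succr.
by field; rewrite -natrM -natrD pnatr_eq0.
Qed.

Lemma wz_step_last m :
  dixon_lcoef m * dixon_term (2 * m).+2 0 = - (wz_cert m (2 * m).+1 * dixon_term (2 * m).+1 0).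
Proof.
rewrite /dixon_lcoef /wz_cert dixon_term_succl.
by field; rewrite -natrM -natrD pnatr_eq0.
Qed.

Lemma dixon_sum_succ m : dixon_sum m.+1
  = dixon_term 0 (2 * m).+2 + \sum_(p < (2 * m).+1) dixon_term p.+1 (2 * m - p).+1
    + dixon_term (2 * m).+2 0.
Proof.
rewrite /dixon_sum mulnS add2n big_ord_recl big_ord_recr /= subn0 addrA.
rewrite /bump !add1n subnn; congr (_ + _ + _); apply: eq_bigr => -[p lt_p2m] _ /=.
by rewrite subSS subSn.
Qed.

Lemma dixon_sum_rec m : dixon_lcoef m * dixon_sum m.+1 = dixon_rcoef m * dixon_sum m.
Proof.
pose G p := wz_cert m p * dixon_term p ((2 * m).+1 - p).
have step (p : 'I_(2 * m).+1) :
    dixon_lcoef m * dixon_term p.+1 (2 * m - p).+1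
    = dixon_rcoef m * dixon_term p (2 * m - p) + (G p.+1 - G p).
  have le_p2m : (p <= 2 * m)%N := ltn_ord p.
  by rewrite (wz_step _ _ _ (subnKC le_p2m)) /G subSS (subSn le_p2m).
have telescope : \sum_(p < (2 * m).+1) (G p.+1 - G p) = G (2 * m).+1 - G 0%N.
  by rewrite -(big_mkord xpredT (fun p => G p.+1 - G p)) telescope_sumr.
rewrite dixon_sum_succ !mulrDr wz_step_first wz_step_last mulr_sumr.
rewrite (eq_bigr _ (fun p _ => step p)) big_split /= telescope.
by rewrite /dixon_sum mulr_sumr /G subn0 subnn; ring.
Qed.

Lemma dixon_lcoef_neq0 m : dixon_lcoef m != 0.
Proof.
have [k_ge0 m_ge0] : 0 <= K /\ 0 <= (m%:R : rat) by rewrite !ler0n.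
by rewrite /dixon_lcoef; apply: lt0r_neq0; rewrite !mulr_gt0 //; lra.
Qed.

Lemma dixon_closed_rec m :
  dixon_lcoef m * (dixon_scale m.+1 ^+ 2 * dixon_closed m.+1)
  = dixon_rcoef m * (dixon_scale m ^+ 2 * dixon_closed m).
Proof.
have [k_ge0 m_ge0] : 0 <= K /\ 0 <= (m%:R : rat) by rewrite !ler0n.
have P1_neq0 : poch (1 + K) (2 * m) != 0 by rewrite lt0r_neq0 // poch_gt0 //; lra.
have P2_neq0 : poch (2 + 2 * K) m != 0 by rewrite lt0r_neq0 // poch_gt0 //; lra.
rewrite /dixon_closed /dixon_scale mulnS add2n !addSn !pochS !factQS !exprS.
rewrite /dixon_lcoef /dixon_rcoef; field.
by rewrite P1_neq0 P2_neq0 /=; apply/and3P; split; apply: lt0r_neq0; lra.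
Qed.

Lemma dixon_sum_closed m : dixon_sum m = dixon_scale m ^+ 2 * dixon_closed m.
Proof.
apply: (@first_order_rec_uniq _ dixon_lcoef dixon_rcoef _
          (fun m => dixon_scale m ^+ 2 * dixon_closed m)) m.
- exact: dixon_lcoef_neq0.
- exact: dixon_sum_rec.
- exact: dixon_closed_rec.
rewrite /dixon_sum /dixon_term /dixon_scale /dixon_closed big_ord1 /= !poch0.
by rewrite muln0 subn0 !addn0 add0n fact0 divr1 !mulr1 !mul1r.
Qed.

Lemma F32_trunc_dixon m :
  F32_trunc (- (2 * m)%:R) (1 + K) (1 + K) (- (2 * m)%:R - K) (- (2 * m)%:R - K) 1 (2 * m)
  = dixon_sum m / dixon_scale m ^+ 2.
Proof.
rewrite -opprD -natrD /F32_trunc /dixon_sum mulr_suml.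
apply: eq_bigr => -[n /= le_n2m] _.
have le_n2mk : (n <= 2 * m + k)%N by exact: leq_trans le_n2m (leq_addr k _).
rewrite !poch_oppn // !poch_1addn expr1n mulr1 /dixon_term /dixon_scale subnKC //.
rewrite addnBA // [(k + 2 * m)%N]addnC.
by rewrite -signr_odd; case: (odd n); field; rewrite !factQ_neq0.
Qed.

End Dixon.

(* The identity holds for all m and k. *)
Theorem mainTheorem11 (m k : nat) (hm : (0 < m)%N) (hk : (0 < k)%N) :
  F32_trunc (- (2 * m)%:R) (1 + k%:R) (1 + k%:R)
            (- (2 * m)%:R - k%:R) (- (2 * m)%:R - k%:R) 1 (2 * m)
  = poch (1 + k%:R) m * poch (1 + k%:R) m * 2 ^+ (2 * m) * poch (1 / 2) m
      * poch (2 + 2 * k%:R) (2 * m)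
    / (poch (1 + k%:R) (2 * m) * poch (1 + k%:R) (2 * m) * poch (2 + 2 * k%:R) m).
Proof.
rewrite F32_trunc_dixon dixon_sum_closed mulrC mulKf //.
by rewrite expf_neq0 // mulf_neq0 // factQ_neq0.
Qed.
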